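(* On the domain $\{(p,q,r): p<q,\ r>1\}$, $\Theta(p,q,r)$ is monotone increasing in $p$ (for fixed $q$ and $r$) and monotone decreasing in $q$ (for fixed $p$ and $r$).
   Context: For $p<q$ and $r>1$ define $$\Theta(p,q,r)=\int_1^r\frac{dx}{\sqrt{\left(\frac{r^p-r^q}{r^p-1}+\frac{r^q-1}{r^p-1}x^p\right)^{2/q}-x^2}}\quad (p\ne0,\ q\ne0),$$ $$\Theta(0,q,r)=\int_1^r\frac{dx}{\sqrt{\left(1+\frac{r^q-1}{\log r}\log x\right)^{2/q}-x^2}},\qquad \Theta(p,0,r)=\int_1^r\frac{dx}{\sqrt{r^{\frac{2(x^p-1)}{r^p-1}}-x^2}}.$$ *)

From HB Require Import structures.
From mathcomp Require Import all_boot all_order all_algebra.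
From mathcomp Require Import all_classical all_reals all_analysis.
Set Implicit Arguments. Unset Strict Implicit. Unset Printing Implicit Defensive.
Import Order.TTheory GRing.Theory Num.Theory.
Import numFieldNormedType.Exports.
Local Open Scope classical_set_scope.
Local Open Scope ring_scope.

(* Integrand of Theta(p,q,r), with the three cases of the paper:
   p <> 0 and q <> 0; p = 0; q = 0.  (p = q = 0 never occurs since p < q.) *)
Definition theta_integrand (R : realType) (p q r x : R) : R :=
  if (p != 0) && (q != 0) then
    1 / Num.sqrt (((r `^ p - r `^ q) / (r `^ p - 1)
                   + (r `^ q - 1) / (r `^ p - 1) * x `^ p) `^ (2 / q) - x ^+ 2)
  else if p == 0 then
    1 / Num.sqrt ((1 + (r `^ q - 1) / ln r * ln x) `^ (2 / q) - x ^+ 2)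
  else
    1 / Num.sqrt (r `^ (2 * (x `^ p - 1) / (r `^ p - 1)) - x ^+ 2).

(* Theta(p,q,r) = \int_1^r integrand dx, as a (nonnegative-integrand)
   Lebesgue integral over the open interval ]1, r[ (the integrand has
   integrable singularities at both endpoints). *)
Definition Theta (R : realType) (p q r : R) : \bar R :=
  (\int[lebesgue_measure]_(x in `]1%R, r[%classic) (theta_integrand p q r x)%:E)%E.

From HB Require Import structures.
From mathcomp Require Import all_boot all_order all_algebra.
From mathcomp Require Import all_classical all_reals all_analysis.
From mathcomp Require Import ring lra.
Import Order.TTheory GRing.Theory Num.Theory.
Local Open Scope ring_scope.

(* Put L = ln r, x = e^(tL) with 0 < t < 1, and psi_c(s) = (e^(sc) - 1)/(e^c - 1)
   (psi_0(s) = s).  In each of the three cases of its definition, the integrand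
   at x equals 1 / sqrt(e^(2 sigma L) - x^2), where sigma is determined by
   psi_(qL)(sigma) = psi_(pL)(t).  Every psi_c increases from 0 to 1 on [0, 1],
   and psi_c(s) strictly decreases in c: with X = e^c it is the slope of the
   chord of the concave map y |-> y^s between 1 and X.  Hence sigma decreases
   in p, increases in q, and exceeds t since p < q; so the integrands, and
   with them the integrals, compare as claimed. *)

Section convexity_of_expR.
Context {R : realType}.
Implicit Types a b s u v : R.

Lemma expR_gt_tangent a b : b != a -> expR a * (1 + (b - a)) < expR b.
Proof.
move=> ba; rewrite -[in ltRHS](subrK a b) expRD mulrC ltr_pM2r ?expR_gt0 //.
by apply: expR_gt1Dx; rewrite subr_eq0.
Qed.

Lemma expR_convex_lt s a b : 0 < s < 1 -> a != b ->
  expR ((1 - s) * a + s * b) < (1 - s) * expR a + s * expR b.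
Proof.
move=> /andP[s_gt0 s_lt1] ab; set m := (1 - s) * a + s * b.
have am : a - m = s * (a - b) by rewrite /m; ring.
have bm : b - m = (1 - s) * (b - a) by rewrite /m; ring.
have ms_gt0 : 0 < 1 - s by rewrite subr_gt0.
have /expR_gt_tangent ta : a != m.
  by rewrite -subr_eq0 am mulf_neq0 ?(gt_eqF s_gt0) // subr_eq0.
have /expR_gt_tangent tb : b != m.
  by rewrite -subr_eq0 bm mulf_neq0 ?(gt_eqF ms_gt0) // subr_eq0 eq_sym.
rewrite am in ta; rewrite bm in tb.
nra.
Qed.

(* In the variable y = e^v: the graph of y |-> y^s lies below its tangent at
   y = e^u. *)
Lemma expR_mul_lt_tangent s u v : 0 < s < 1 -> v != u ->
  expR (s * v) < expR (s * u) + s * expR (s * u) / expR u * (expR v - expR u).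
Proof.
move=> s01 vu; set b := v - (1 - s) * u.
have -> : expR (s * u) + s * expR (s * u) / expR u * (expR v - expR u)
    = (1 - s) * expR (s * u) + s * expR b.
  rewrite /b (expRB v) [(1 - s) * u]mulrBl mul1r (expRB u).
  by field; rewrite !gt_eqF ?expR_gt0.
have -> : s * v = (1 - s) * (s * u) + s * b by rewrite /b; ring.
apply: expR_convex_lt => //; rewrite -subr_eq0.
have -> : s * u - b = u - v by rewrite /b; ring.
by rewrite subr_eq0 eq_sym.
Qed.

End convexity_of_expR.

Section psi.
Context {R : realType}.
Implicit Types a b c s t y : R.

Definition psi c s := if c == 0 then s else (expR (s * c) - 1) / (expR c - 1).

Lemma expR_sub1_neq0 c : c != 0 -> expR c - 1 != 0.
Proof. by rewrite subr_eq0 -expR0 (inj_eq (@expR_inj R)). Qed.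

Lemma expR_psi c s : expR (s * c) = 1 + psi c s * (expR c - 1).
Proof.
rewrite /psi; case: eqP => [->|/eqP c0].
  by rewrite mulr0 expR0 subrr mulr0 addr0.
by rewrite divfK ?expR_sub1_neq0 // addrC subrK.
Qed.

Lemma psi0 c : psi c 0 = 0.
Proof. by rewrite /psi mul0r expR0 subrr mul0r if_same. Qed.

Lemma psi1 c : psi c 1 = 1.
Proof. by rewrite /psi mul1r; case: eqP => // /eqP /expR_sub1_neq0 /divff. Qed.

Lemma psi_homo c : {homo psi c : s1 s2 / s1 < s2}.
Proof.
move=> s1 s2 s12; rewrite /psi; case: (ltgtP c 0) => [c0|c0|//].
- have e : expR c - 1 < 0 by rewrite subr_lt0 expR_lt1.
  by rewrite ltr_nM2r ?invr_lt0 // ltrD2r ltr_expR ltr_nM2r.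
- have e : 0 < expR c - 1 by rewrite subr_gt0 expR_gt1.
  by rewrite ltr_pM2r ?invr_gt0 // ltrD2r ltr_expR ltr_pM2r.
Qed.

Lemma ler_psi c : {mono psi c : s1 s2 / s1 <= s2}.
Proof. exact/le_mono/psi_homo. Qed.

Lemma ltr_psi c : {mono psi c : s1 s2 / s1 < s2}.
Proof. exact/leW_mono/ler_psi. Qed.

Lemma psi_itv c s : 0 < s < 1 -> 0 < psi c s < 1.
Proof.
by rewrite -[X in X < psi c s](psi0 c) -[X in psi c s < X](psi1 c) !ltr_psi.
Qed.

Lemma psi_opp c s : psi (- c) (1 - s) = 1 - psi c s.
Proof.
rewrite /psi oppr_eq0; case: eqP => // /eqP c0.
have ec := expR_gt0 c; have e1 := @expR_sub1_neq0 c c0.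
rewrite mulrN expRN [(1 - s) * c]mulrBl mul1r opprB (expRB (s * c)).
by field; rewrite e1 (gt_eqF ec) mulN1r -opprB oppr_eq0 e1.
Qed.

Lemma psi_lt_id c s : 0 < s < 1 -> 0 < c -> psi c s < s.
Proof.
move=> s01 c0; have := expR_mul_lt_tangent _ 0 _ s01 (lt0r_neq0 c0).
rewrite mulr0 expR0 divr1 mulr1 /psi (gt_eqF c0) ltr_pdivrMr ?subr_gt0 ?expR_gt1 //.
lra.
Qed.

Lemma psi_gt_id c s : 0 < s < 1 -> c < 0 -> s < psi c s.
Proof.
move=> /andP[s_gt0 s_lt1] c0; rewrite -[c]opprK -[in psi _ s](subKr 1 s) psi_opp.
have := @psi_lt_id (- c) (1 - s); rewrite oppr_gt0 c0; lra.
Qed.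

Lemma psi_decreasing_pos c1 c2 s : 0 < s < 1 -> 0 < c1 -> c1 < c2 ->
  psi c2 s < psi c1 s.
Proof.
move=> s01 c1_gt0 c12; have c2_gt0 := lt_trans c1_gt0 c12.
have X1_gt1 : 1 < expR c1 by rewrite expR_gt1.
have X12 : expR c1 < expR c2 by rewrite ltr_expR.
have X2_gt1 : 1 < expR c2 by rewrite expR_gt1.
(* D is the slope of y |-> y^s at e^c1; the tangent there bounds both the
   chord from 1 to e^c1 from below and the rise from e^c1 to e^c2 from above. *)
set D := s * expR (s * c1) / expR c1.
have D_gt0 : 0 < D.
  by case/andP: s01 => s_gt0 _; rewrite !divr_gt0 ?mulr_gt0 ?expR_gt0.
have := expR_mul_lt_tangent _ c1 0 s01 (negbT (lt_eqF c1_gt0)).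
rewrite -/D mulr0 expR0 => tangent0.
have := expR_mul_lt_tangent _ c1 _ s01 (negbT (gt_eqF c12)).
rewrite -/D => tangent2.
rewrite /psi !gt_eqF // ltr_pdivrMr ?subr_gt0 // mulrAC ltr_pdivlMr ?subr_gt0 //.
have chord1 : D * (expR c1 - 1) * (expR c2 - expR c1)
              < (expR (s * c1) - 1) * (expR c2 - expR c1).
  by rewrite ltr_pM2r ?subr_gt0 //; lra.
have rise : (expR (s * c2) - 1) * (expR c1 - 1)
            < (expR (s * c1) - 1 + D * (expR c2 - expR c1)) * (expR c1 - 1).
  by rewrite ltr_pM2r ?subr_gt0 //; lra.
lra.
Qed.

Lemma psi_decreasing c1 c2 s : 0 < s < 1 -> c1 < c2 -> psi c2 s < psi c1 s.
Proof.
move=> s01 c12; have [c1_gt0|c1_le0] := ltP 0 c1; first exact: psi_decreasing_pos.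
have [c2_lt0|c2_ge0] := ltP c2 0.
  have psiE c : psi c s = 1 - psi (- c) (1 - s) by rewrite psi_opp subKr.
  rewrite !psiE ltrD2l ltrN2 psi_decreasing_pos ?oppr_gt0 ?ltrN2 //.
  by case/andP: s01 => s_gt0 s_lt1; rewrite subr_gt0 s_lt1 ltrBlDr ltrDl.
case: (ltgtP c1 0) c1_le0 => [c1_lt0 _|//|c10 _].
  apply: (le_lt_trans _ (psi_gt_id _ _ s01 c1_lt0)).
  case: (ltgtP c2 0) c2_ge0 => [//|c2_gt0 _|-> _]; last by rewrite /psi eqxx.
  exact/ltW/psi_lt_id.
by rewrite c10 {2}/psi eqxx psi_lt_id // -c10.
Qed.

Lemma psi_nonincreasing c1 c2 s : 0 < s < 1 -> c1 <= c2 ->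
  psi c2 s <= psi c1 s.
Proof.
move=> s01; rewrite le_eqVlt => /predU1P[->//|].
by move/(psi_decreasing _ _ _ s01)/ltW.
Qed.

Definition psi_inv c y := if c == 0 then y else ln (1 + y * (expR c - 1)) / c.

Lemma expR_psi_inv c y : 0 < y < 1 ->
  expR (psi_inv c y * c) = 1 + y * (expR c - 1).
Proof.
move=> /andP[y0 y1]; rewrite /psi_inv; case: eqP => [->|/eqP c0].
  by rewrite mulr0 expR0 subrr mulr0 addr0.
rewrite divfK // lnK // posrE.
have := expR_gt0 c; nra.
Qed.

Lemma psi_invK c y : 0 < y < 1 -> psi c (psi_inv c y) = y.
Proof.
move=> y01; have [->|c0] := eqVneq c 0; first by rewrite /psi /psi_inv eqxx.
have := expR_psi c (psi_inv c y).
by rewrite expR_psi_inv // => /addrI/(mulIf (expR_sub1_neq0 _ c0)).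
Qed.

Definition sigma a b t := psi_inv b (psi a t).

Lemma psi_sigma a b t : 0 < t < 1 -> psi b (sigma a b t) = psi a t.
Proof. by move=> t01; rewrite psi_invK // psi_itv. Qed.

Lemma sigma_itv a b t : 0 < t < 1 -> 0 < sigma a b t < 1.
Proof.
move=> t01; have /andP[psi_gt0 psi_lt1] := psi_itv a t t01.
by rewrite -[0 < _](ltr_psi b) -[_ < 1](ltr_psi b) psi0 psi1 psi_sigma // psi_gt0.
Qed.

Lemma sigma_gt_id a b t : 0 < t < 1 -> a < b -> t < sigma a b t.
Proof. by move=> t01 ab; rewrite -(ltr_psi b) psi_sigma // psi_decreasing. Qed.

Lemma sigma_nonincreasing_l a1 a2 b t : 0 < t < 1 -> a1 <= a2 ->
  sigma a2 b t <= sigma a1 b t.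
Proof.
by move=> t01 a12; rewrite -(ler_psi b) !psi_sigma // psi_nonincreasing.
Qed.

Lemma sigma_nondecreasing_r a b1 b2 t : 0 < t < 1 -> b1 <= b2 ->
  sigma a b1 t <= sigma a b2 t.
Proof.
move=> t01 b12; rewrite -(ler_psi b1) psi_sigma // -(psi_sigma a b2 t t01).
by rewrite psi_nonincreasing // sigma_itv.
Qed.

End psi.

(* No measurability is needed: the integral of a nonnegative function is a
   supremum over the simple functions below it. *)
Lemma le_ge0_integral d (T : measurableType d) (R : realType)
    (mu : {measure set T -> \bar R}) (D : set T) (f g : T -> \bar R) :
  (forall x, D x -> 0 <= f x)%E -> (forall x, D x -> f x <= g x)%E ->
  (\int[mu]_(x in D) f x <= \int[mu]_(x in D) g x)%E.
Proof.
move=> f0 fg; have g0 x : D x -> (0 <= g x)%E.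
  by move=> Dx; exact: le_trans (f0 _ Dx) (fg _ Dx).
rewrite !ge0_integralE //; apply: ge_ereal_sup => _ [h hf <-].
apply: ereal_sup_ubound; exists h => //= x; apply: le_trans (hf x) _.
by rewrite /patch; case: ifP => // /set_mem /fg.
Qed.

Section integrand.
Context {R : realType}.
Implicit Types a b c p q r t y : R.

Lemma powR_expR a y : 0 < a -> a `^ y = expR (y * ln a).
Proof. by move=> a0; rewrite /powR gt_eqF. Qed.

Lemma theta_integrand_sigma p q r t : 1 < r -> p < q -> 0 < t < 1 ->
  theta_integrand p q r (expR (t * ln r)) =
  1 / Num.sqrt (expR (2 * (sigma (p * ln r) (q * ln r) t * ln r))
                - expR (t * ln r) ^+ 2).
Proof.
move=> r1 pq t01; have r0 : 0 < r := lt_trans ltr01 r1.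
have L_gt0 : 0 < ln r := ln_gt0 r1.
set L := ln r in L_gt0 *; set x := expR (t * L).
set lam := psi (p * L) t; set sg := sigma (p * L) (q * L) t.
have rE y : r `^ y = expR (y * L) by rewrite powR_expR.
have lnx : ln x = t * L by rewrite /x expRK.
have lam01 : 0 < lam < 1 := psi_itv _ _ t01.
have xpE : x `^ p = 1 + lam * (expR (p * L) - 1).
  by rewrite powR_expR ?expR_gt0 // lnx -expR_psi; congr expR; ring.
have baseE : expR (sg * (q * L)) = 1 + lam * (expR (q * L) - 1).
  exact: expR_psi_inv.
have powE : q != 0 ->
    (1 + lam * (expR (q * L) - 1)) `^ (2 / q) = expR (2 * (sg * L)).
  move=> q0; rewrite -baseE powR_expR ?expR_gt0 // expRK; congr expR.
  by field; rewrite q0.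
rewrite /theta_integrand; case: (eqVneq p 0) => [p0|p0] /=.
  have q0 : q != 0 by rewrite gt_eqF // -p0.
  rewrite -powE // rE lnx /lam p0 mul0r /psi eqxx.
  by congr (1 / Num.sqrt (_ `^ _ - _)); rewrite -/L; field; rewrite gt_eqF.
have pL0 := expR_sub1_neq0 _ (mulf_neq0 p0 (lt0r_neq0 L_gt0)).
case: (eqVneq q 0) => [q0|q0] /=.
  rewrite /sg /sigma q0 mul0r /psi_inv eqxx -/lam !rE xpE.
  by congr (1 / Num.sqrt (expR _ - _)); field.
rewrite -powE // !rE xpE.
by congr (1 / Num.sqrt (_ `^ _ - _)); field.
Qed.

Lemma theta_integrand_ge0 p q r y : 0 <= theta_integrand p q r y.
Proof.
rewrite /theta_integrand.
by case: ifP => _; [|case: ifP => _]; rewrite divr_ge0 ?sqrtr_ge0.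
Qed.

Lemma inv_sqrt_subr_le a b c : a < b -> b <= c ->
  1 / Num.sqrt (c - a) <= 1 / Num.sqrt (b - a).
Proof.
move=> ab bc; have ba : 0 < b - a by rewrite subr_gt0.
have ca : 0 < c - a by rewrite subr_gt0 (lt_le_trans ab).
by rewrite !div1r lef_pV2 ?posrE ?sqrtr_gt0 // ler_sqrt ?lerD2r // ltW.
Qed.

Lemma Theta_le_sigma p1 q1 p2 q2 r : 1 < r -> p1 < q1 -> p2 < q2 ->
  (forall t : R, 0 < t < 1 ->
     t < sigma (p2 * ln r) (q2 * ln r) t <= sigma (p1 * ln r) (q1 * ln r) t) ->
  (Theta p1 q1 r <= Theta p2 q2 r)%E.
Proof.
move=> r1 pq1 pq2 sigma_le; have L_gt0 : 0 < ln r := ln_gt0 r1.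
apply: le_ge0_integral => [x _|x]; first by rewrite lee_fin theta_integrand_ge0.
rewrite /= in_itv /= => /andP[x1 xr]; have x0 := lt_trans ltr01 x1.
have t01 : 0 < ln x / ln r < 1.
  rewrite divr_gt0 ?ln_gt0 //= ltr_pdivrMr // mul1r.
  by rewrite ltr_ln ?posrE // (lt_trans x0).
have xE : x = expR (ln x / ln r * ln r).
  by rewrite divfK ?lt0r_neq0 // lnK ?posrE.
have /andP[t_lt sg12] := sigma_le _ t01.
rewrite lee_fin xE !theta_integrand_sigma // inv_sqrt_subr_le //.
  by rewrite -expRM_natl ltr_expR ltr_pM2l // ltr_pM2r.
by rewrite ler_expR ler_pM2l // ler_pM2r.
Qed.

End integrand.

Theorem theorem5p1 (R : realType) :
  (forall p1 p2 q r : R, p1 <= p2 -> p2 < q -> 1 < r ->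
     (Theta p1 q r <= Theta p2 q r)%E) /\
  (forall p q1 q2 r : R, p < q1 -> q1 <= q2 -> 1 < r ->
     (Theta p q2 r <= Theta p q1 r)%E).
Proof.
split=> [p1 p2 q r p12 p2q r1 | p q1 q2 r pq1 q12 r1];
  have L_gt0 : 0 < ln r := ln_gt0 r1.
- have p1q : p1 < q := le_lt_trans p12 p2q.
  apply: Theta_le_sigma => // t t01.
  by rewrite sigma_gt_id ?ltr_pM2r // sigma_nonincreasing_l ?ler_pM2r.
- have pq2 : p < q2 := lt_le_trans pq1 q12.
  apply: Theta_le_sigma => // t t01.
  by rewrite sigma_gt_id ?ltr_pM2r // sigma_nondecreasing_r ?ler_pM2r.
Qed.
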